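(* Let $k$ be a field, $V$ a $k$-vector space, and $\varphi\in\operatorname{End}_k(V)$ a finite potent endomorphism with index $i(\varphi)=r$ and AST-decomposition $V=W_\varphi\oplus U_\varphi$. Fix a Jordan basis of $U_\varphi$ induced by $\varphi|_{U_\varphi}$, given by pairwise disjoint index sets $S_1,\dots,S_r$, $\overline S=S_1\cup\dots\cup S_r$, and vectors $v_{s}\in U_\varphi$ ($s\in\overline S$) such that, writing $s_h$ for an element of $S_h$, one has $\varphi^{h}(v_{s_h})=0$ and $\bigcup_{h=1}^r\bigcup_{s_h\in S_h}\{v_{s_h},\varphi(v_{s_h}),\dots,\varphi^{h-1}(v_{s_h})\}$ is a basis of $U_\varphi$. Then the generalized inverses $g\in\operatorname{End}_k(U_\varphi)$ of $\varphi|_{U_\varphi}$ are exactly the linear maps determined, for each $1\le h\le r$ and $s_h\in S_h$, by $$g(\varphi^i(v_{s_h}))=\begin{cases}\varphi^{i-1}(v_{s_h})+\sum_{s_t\in\overline S}\lambda^{i}_{s_h,s_t}\,\varphi^{t-1}(v_{s_t}) & \text{if } 1\le i\le h-1,\\ v_{s_h}' & \text{if } i=0,\end{cases}$$ where $v'_{s_h}\in U_\varphi$ are arbitrary vectors and $\lambda^{i}_{s_h,s_t}\in k$ are arbitrary scalars such that, for each $s_h$ and $i$, $\lambda^{i}_{s_h,s_t}=0$ for all but finitely many $s_t\in\overline S$ (here $t$ denotes the index with $s_t\in S_t$).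
   Context: An endomorphism $\varphi$ of a $k$-vector space $V$ is finite potent if $\varphi^n(V)$ is finite dimensional for some $n$. For such $\varphi$, the AST-decomposition is $V=U_\varphi\oplus W_\varphi$ where $U_\varphi=\{v\in V: \varphi^m(v)=0 \text{ for some } m\}$ and $W_\varphi=\{v\in V: p(\varphi)(v)=0 \text{ for some } p(x)\in k[x] \text{ coprime to } x\}$; both are $\varphi$-invariant, $\varphi|_{U_\varphi}$ is nilpotent, $W_\varphi$ is finite dimensional and $\varphi|_{W_\varphi}$ is an automorphism. The index $i(\varphi)$ is the nilpotency order of $\varphi|_{U_\varphi}$. A generalized inverse of an endomorphism $g_0$ of $U$ is an endomorphism $g$ of $U$ with $g_0\circ g\circ g_0=g_0$. *)

From HB Require Import structures.
From mathcomp Require Import all_boot all_order all_algebra.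
From mathcomp Require Import boolp.

Set Implicit Arguments.
Unset Strict Implicit.
Unset Printing Implicit Defensive.
Import GRing.Theory.
Local Open Scope ring_scope.

(* U_phi = { v in V : phi^m v = 0 for some m } *)
Definition Upred (k : fieldType) (V : lmodType k) (phi : {linear V -> V})
  : {pred V} := fun v => `[< exists m : nat, iter m phi v = 0 >].

Lemma iter_linear_D (k : fieldType) (V : lmodType k) (phi : {linear V -> V})
  (m : nat) (a : k) (x y : V) :
  iter m phi (a *: x + y) = a *: iter m phi x + iter m phi y.
Proof. by elim: m => //= m ->; rewrite linearD linearZ. Qed.

Lemma Upred_submod (k : fieldType) (V : lmodType k) (phi : {linear V -> V}) :
  GRing.submod_closed (Upred phi).
Proof.
split.
  by apply/asboolP; exists 0%N.
move=> a x y /asboolP [m Hm] /asboolP [n Hn]; apply/asboolP; exists (m + n)%N.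
have z0 : forall p, iter p phi 0 = 0 by elim=> //= p ->; rewrite linear0.
rewrite iter_linear_D.
have -> : iter (m + n) phi x = 0 by rewrite addnC iterD Hm z0.
have -> : iter (m + n) phi y = 0 by rewrite iterD Hn z0.
by rewrite scaler0 addr0.
Qed.

HB.instance Definition _ (k : fieldType) (V : lmodType k) (phi : {linear V -> V}) :=
  GRing.isSubmodClosed.Build k V (Upred phi) (Upred_submod phi).

Definition Usp (k : fieldType) (V : lmodType k) (phi : {linear V -> V}) :=
  {v : V | v \in Upred phi}.

HB.instance Definition _ (k : fieldType) (V : lmodType k) (phi : {linear V -> V}) :=
  [isSub for (@sval V (fun v => v \in Upred phi)) : Usp phi -> V].
HB.instance Definition _ (k : fieldType) (V : lmodType k) (phi : {linear V -> V}) :=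
  [Choice of Usp phi by <:].
HB.instance Definition _ (k : fieldType) (V : lmodType k) (phi : {linear V -> V}) :=
  [SubChoice_isSubLmodule of Usp phi by <:].

Lemma phiU_subproof (k : fieldType) (V : lmodType k) (phi : {linear V -> V})
  (u : Usp phi) : phi (val u) \in Upred phi.
Proof.
case: u => x /= /asboolP [m Hm]; apply/asboolP; exists m.
by rewrite -iterSr iterS Hm linear0.
Qed.

Definition phiU (k : fieldType) (V : lmodType k) (phi : {linear V -> V})
  (u : Usp phi) : Usp phi := exist _ (phi (val u)) (phiU_subproof u).

Definition finite_dim_set (k : fieldType) (V : lmodType k) (P : V -> Prop) :=
  exists l : seq V, forall x, P x ->
    exists c : nat -> k, x = \sum_(i < size l) c i *: l`_i.

Definition finite_potent (k : fieldType) (V : lmodType k) (phi : {linear V -> V}) :=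
  exists n : nat, finite_dim_set (fun x => exists y, x = iter n phi y).

Definition nil_index (k : fieldType) (W : lmodType k) (f : W -> W) (r : nat) :=
  (forall u, iter r f u = 0) /\
  (forall m, (forall u, iter m f u = 0) -> (r <= m)%N).

Definition gen_inverse (k : fieldType) (W : lmodType k) (g0 g : W -> W) :=
  forall u, g0 (g (g0 u)) = g0 u.

(* Linear independence / spanning / basis for a family e indexed by the
   elements j of T satisfying D j (arbitrary, possibly infinite, families;
   linear combinations are finite). *)
Definition lin_indep (k : fieldType) (W : lmodType k) (T : eqType)
  (D : pred T) (e : T -> W) :=
  forall (l : seq T) (c : T -> k), uniq l -> all D l ->
    \sum_(j <- l) c j *: e j = 0 -> forall j, j \in l -> c j = 0.

Definition spanning (k : fieldType) (W : lmodType k) (T : eqType)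
  (D : pred T) (e : T -> W) :=
  forall w : W, exists (l : seq T) (c : T -> k),
    all D l /\ w = \sum_(j <- l) c j *: e j.

Definition is_basis (k : fieldType) (W : lmodType k) (T : eqType)
  (D : pred T) (e : T -> W) := lin_indep D e /\ spanning D e.

(* Since f g f and f are linear, g is a generalized inverse of the nilpotent
   f exactly when f (g (f b)) = f b on every Jordan basis vector b. For
   b = f^(i-1) v_s with 1 <= i < ht s this says that g (f^i v_s) - f^(i-1) v_s
   lies in ker f, and ker f is spanned by the chain tops f^(ht t - 1) v_t;
   on the images f^(ht s) v_s = 0 and on the v_s themselves there is no
   constraint, whence the arbitrary v'_s. Finite potency and the index r are
   not needed: only the Jordan basis of U_phi enters. *)

From HB Require Import structures.
From mathcomp Require Import all_boot all_order all_algebra.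
From mathcomp Require boolp.
Set Implicit Arguments.
Unset Strict Implicit.
Unset Printing Implicit Defensive.
Import GRing.Theory.
Local Open Scope ring_scope.

Lemma phiU_is_linear (k : fieldType) (V : lmodType k) (phi : {linear V -> V}) :
  linear (@phiU k V phi).
Proof. by move=> a x y; apply: val_inj; rewrite /= linearP. Qed.

HB.instance Definition _ (k : fieldType) (V : lmodType k) (phi : {linear V -> V}) :=
  GRing.isLinear.Build k (Usp phi) (Usp phi) *:%R (@phiU k V phi)
    (@phiU_is_linear k V phi).

Section GeneralizedInverse.
Variables (k : fieldType) (W : lmodType k) (f g : {linear W -> W}).

Lemma gen_inverse_ker (x : W) : gen_inverse f g -> f (g (f x) - x) = 0.
Proof. by move=> fgf; rewrite linearB /= fgf subrr. Qed.

Lemma gen_inverse_spanning (T : eqType) (D : pred T) (e : T -> W) :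
  spanning D e -> (forall j, D j -> f (g (f (e j))) = f (e j)) ->
  gen_inverse f g.
Proof.
move=> span_e fgf_e u; have [l [c [Dl ->]]] := span_e u.
rewrite !linear_sum; apply: eq_big_seq => j /(allP Dl) Dj.
by rewrite !linearZ /= fgf_e.
Qed.

End GeneralizedInverse.

Lemma spanning_uniq (k : fieldType) (W : lmodType k) (T : eqType)
    (D : pred T) (e : T -> W) :
  spanning D e -> forall w, exists (l : seq T) (c : T -> k),
    [/\ uniq l, all D l & w = \sum_(j <- l) c j *: e j].
Proof.
move=> span_e w; have [l [c [Dl ->]]] := span_e w.
exists (undup l), (fun j => c j *+ count_mem j l); split.
- exact: undup_uniq.
- by apply/allP => j; rewrite mem_undup => /(allP Dl).
rewrite -(big_undup_iterop_count _ _ xpredT); apply: eq_bigr => j _.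
by rewrite -scalerMnl; case: (count_mem j l) => // n; rewrite iteropS.
Qed.

Section JordanBasis.
Variables (k : fieldType) (W : lmodType k) (f : {linear W -> W}).
Variables (I : eqType) (ht : I -> nat) (v : I -> W).
Local Notation jordan_dom := (fun p : I * nat => (p.2 < ht p.1)%N).
Local Notation jvec := (fun p : I * nat => iter p.2 f (v p.1)).
Local Notation top t := (iter (ht t).-1 f (v t)).
Hypothesis v_nil : forall s, iter (ht s) f (v s) = 0.
Hypothesis jordan_basis : is_basis jordan_dom jvec.

(* When ht t = 0 the truncated (ht t).-1 is 0, but then v t = 0 by [v_nil]. *)
Lemma f_top t : f (top t) = 0.
Proof.
have := v_nil t; case: (ht t) => [/= -> | h]; first exact: linear0.
by rewrite -iterS.
Qed.

Lemma f_top_combination (L : seq I) (lam : I -> k) :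
  f (\sum_(t <- L) lam t *: top t) = 0.
Proof.
by rewrite linear_sum big1 // => t _; rewrite linearZ /= f_top scaler0.
Qed.

(* Applying f shifts each chain; the shifted non-top vectors are again in the
   basis, so independence kills their coefficients. *)
Lemma ker_nontop_coef0 (l : seq (I * nat)) (c : I * nat -> k) :
  uniq l -> all jordan_dom l -> f (\sum_(p <- l) c p *: jvec p) = 0 ->
  forall p, p \in l -> (p.2.+1 < ht p.1)%N -> c p = 0.
Proof.
move=> l_uniq Dl fw0 p pl p_nontop.
pose shift (p : I * nat) := (p.1, p.2.+1).
have shift_inj : injective shift by move=> [a b] [a' b'] [-> ->].
pose nontop (q : I * nat) := (q.2.+1 < ht q.1)%N.
pose A := filter nontop l.
have shifted_sum0 :
    \sum_(q <- map shift A) c (q.1, q.2.-1) *: jvec q = 0.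
  rewrite big_map big_filter -[RHS]fw0 linear_sum [RHS](bigID nontop) /=.
  rewrite [X in _ = _ + X]big1_seq ?addr0.
    by apply: eq_bigr => -[s j] _; rewrite linearZ.
  move=> [s j] /andP [/= top_q /(allP Dl) /= Dq].
  have top_j : j.+1 = ht s by apply/eqP; rewrite eqn_leq Dq leqNgt.
  by rewrite linearZ /= -iterS top_j v_nil scaler0.
have := jordan_basis.1 _ _ _ _ shifted_sum0 (shift p).
case: p pl p_nontop => s j pl p_nontop /=; apply.
- by rewrite map_inj_uniq ?filter_uniq.
- by apply/allP => _ /mapP [q /[!mem_filter] /andP [nontop_q _] ->].
- by apply: map_f; rewrite mem_filter pl andbT.
Qed.

Lemma ker_jordan_span (w : W) : f w = 0 ->
  exists (lam : I -> k) (L : seq I),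
    [/\ uniq L, forall t, t \notin L -> lam t = 0
       & w = \sum_(t <- L) lam t *: top t].
Proof.
move=> fw0; have [l [c [l_uniq Dl w_def]]] := spanning_uniq jordan_basis.2 w.
pose nontop (q : I * nat) := (q.2.+1 < ht q.1)%N.
pose topv (t : I) := (t, (ht t).-1).
pose B := [seq p <- l | ~~ nontop p].
have B_top : map topv (map fst B) = B.
  rewrite -map_comp map_id_in // => -[s j].
  rewrite mem_filter => /andP [top_p /(allP Dl) /= Dp].
  have top_j : j.+1 = ht s by apply/eqP; rewrite eqn_leq Dp leqNgt.
  by rewrite /topv /= -top_j.
exists (fun t => if t \in map fst B then c (topv t) else 0), (map fst B); split.
- by apply: (@map_uniq _ _ topv); rewrite B_top filter_uniq.
- by move=> t /negbTE ->.
rewrite w_def (bigID nontop) /= big1_seq ?add0r; last first.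
  move=> p /andP [nontop_p pl].
  by rewrite (ker_nontop_coef0 l_uniq Dl _ pl nontop_p) ?scale0r // -w_def.
rewrite -big_filter -/B -{1}B_top !big_map; apply: eq_big_seq => t tB /=.
by rewrite map_f.
Qed.

Lemma gen_inverse_jordan_shape (g : {linear W -> W}) : gen_inverse f g ->
  forall s i, (0 < i)%N -> exists (lam : I -> k) (L : seq I),
    [/\ uniq L, forall t, t \notin L -> lam t = 0
       & g (iter i f (v s)) = iter i.-1 f (v s) + \sum_(t <- L) lam t *: top t].
Proof.
move=> g_inv s [//|i] _.
have [lam [L [L_uniq lam0 ker_def]]] :=
  ker_jordan_span (gen_inverse_ker (iter i f (v s)) g_inv).
by exists lam, L; split=> //; rewrite -ker_def addrC subrK.
Qed.

Lemma jordan_shape_gen_inverse (g : {linear W -> W}) :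
  (forall s i, (0 < i < ht s)%N -> f (g (iter i f (v s))) = iter i f (v s)) ->
  gen_inverse f g.
Proof.
move=> fg_id; apply: (gen_inverse_spanning jordan_basis.2) => -[s j] /= Dj.
rewrite -iterS; case: (ltnP j.+1 (ht s)) => [j_nontop | j_top]; first exact: fg_id.
have -> : j.+1 = ht s by apply/eqP; rewrite eqn_leq j_top Dj.
by rewrite v_nil !linear0.
Qed.

End JordanBasis.

Theorem lemma3p10 (k : fieldType) (V : lmodType k) (phi : {linear V -> V})
  (r : nat) (I : eqType) (ht : I -> nat) (v : I -> Usp phi) :
  finite_potent phi ->
  nil_index (@phiU k V phi) r ->
  (forall s, (0 < ht s <= r)%N) ->
  (forall s, iter (ht s) (@phiU k V phi) (v s) = 0) ->
  is_basis (fun p : I * nat => (p.2 < ht p.1)%N)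
           (fun p : I * nat => iter p.2 (@phiU k V phi) (v p.1)) ->
  forall g : {linear Usp phi -> Usp phi},
    gen_inverse (@phiU k V phi) g <->
    exists (v' : I -> Usp phi) (lam : nat -> I -> I -> k) (L : nat -> I -> seq I),
      (forall i s, uniq (L i s) /\ (forall t, t \notin L i s -> lam i s t = 0)) /\
      (forall s, g (v s) = v' s /\
         forall i, (1 <= i <= (ht s).-1)%N ->
           g (iter i (@phiU k V phi) (v s)) =
             iter i.-1 (@phiU k V phi) (v s)
             + \sum_(t <- L i s) lam i s t *: iter (ht t).-1 (@phiU k V phi) (v t)).
Proof.
move=> _ _ _ v_nil jordan_basis g; split.
- move=> g_inv.
  have shape (p : nat * I) : exists x : (I -> k) * seq I,
      [/\ uniq x.2, forall t, t \notin x.2 -> x.1 t = 0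
         & (0 < p.1)%N -> g (iter p.1 (@phiU k V phi) (v p.2)) =
             iter p.1.-1 (@phiU k V phi) (v p.2)
             + \sum_(t <- x.2) x.1 t *: iter (ht t).-1 (@phiU k V phi) (v t)].
    case: p => [[|i] s]; first by exists (fun _ => 0, [::]).
    have [lam [L [L_uniq lam0 g_shape]]] :=
      gen_inverse_jordan_shape v_nil jordan_basis g_inv s (ltn0Sn i).
    by exists (lam, L).
  have [x x_shape] := boolp.choice shape.
  exists (fun s => g (v s)), (fun i s => (x (i, s)).1), (fun i s => (x (i, s)).2).
  split=> [i s | s]; first by case: (x_shape (i, s)).
  by split=> // i /andP [i_gt0 _]; case: (x_shape (i, s)) => _ _ ->.
- move=> [v' [lam [L [_ g_shape]]]].
  apply: (jordan_shape_gen_inverse v_nil jordan_basis) => s i /andP [i_gt0 i_lt].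
  have i_range : (1 <= i <= (ht s).-1)%N by rewrite i_gt0 -ltnS (ltn_predK i_lt).
  rewrite (g_shape s).2 // linearD /= (f_top_combination v_nil) addr0.
  by rewrite -iterS (ltn_predK i_gt0).
Qed.
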